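(* Let $\Lambda$ be a rank-2 Bratteli diagram and let $x$ be an infinite path in $\Lambda$ such that $o(x(0,ne_1))\to\infty$ as $n\to\infty$. Then $x$ is aperiodic: whenever $p,q\in\mathbb N^2$ satisfy $\sigma^p(x)=\sigma^q(x)$, we have $p=q$.
   Context: A $2$-graph is a countable category $\Lambda$ with a functor $d:\Lambda\to\mathbb N^2$ satisfying unique factorisation (if $d(\lambda)=m+n$ there are unique $\mu,\nu$ with $d(\mu)=m,d(\nu)=n,\lambda=\mu\nu$). Vertices = degree-$0$ paths; $r,s$ range/source; $\Lambda^n=d^{-1}(n)$; $e_1=(1,0),e_2=(0,1)$; $vE=E\cap r^{-1}(v)$, $Ev=E\cap s^{-1}(v)$. Row-finite: each $v\Lambda^n$ finite. Blue paths: degree in $\mathbb Ne_1$; red paths: degree in $\mathbb Ne_2$. $\lambda(m,n)$ is the unique path with $\lambda=\lambda'\lambda(m,n)\lambda''$, $d(\lambda')=m$, $d(\lambda(m,n))=n-m$; $\lambda(n)=\lambda(n,n)$. A cycle: $d(\lambda)\ne0$, $r(\lambda)=s(\lambda)$, $\lambda(n)\ne s(\lambda)$ for $0<n<d(\lambda)$; isolated: no $n\le d(\lambda)$ with $r(\lambda)\Lambda^n\setminus\{\lambda(0,n)\}\ne\emptyset$ and no $n\le d(\lambda)$ with $\Lambda^ns(\lambda)\setminus\{\lambda(d(\lambda)-n,d(\lambda))\}\ne\emptyset$. A rank-2 Bratteli diagram of depth $N\in\mathbb N\cup\{\infty\}$ is a row-finite 2-graph with $\Lambda^0=\bigsqcup_{0\le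 n\le N}V_n$ (all $n\in\mathbb N$ if $N=\infty$), each $V_n$ nonempty finite, such that: every blue edge $e$ has $r(e)\in V_n,s(e)\in V_{n+1}$ for some $n$; every vertex $v$ with $\Lambda^{e_1}v=\emptyset$ lies in $V_0$ and every $v$ with $v\Lambda^{e_1}=\emptyset$ lies in $V_N$ (none if $N=\infty$); every vertex lies on an isolated cycle of red edges and every red edge has range and source in the same $V_n$. For a blue path $\alpha$, let $f$ be the unique red edge with $s(f)=r(\alpha)$ and $\mathcal F(\alpha)$ the unique blue path with $f\alpha=\mathcal F(\alpha)f'$ for a red edge $f'$; $o(\alpha)=\min\{k>0:\mathcal F^k(\alpha)=\alpha\}$. $\Omega_2$ is the 2-graph with objects $\mathbb N^2$, morphisms $(m,n)$ for $m\le n$, $r(m,n)=m,s(m,n)=n,d(m,n)=n-m$. An infinite path is a degree-preserving functor $x:\Omega_2\to\Lambda$; write $x(m,n)$ for the image of $(m,n)$; for $p\in\mathbb N^2$, $\sigma^p(x)$ is the infinite path $(m,n)\mapsto x(m+p,n+p)$. *)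

From Stdlib Require Import Arith List.

Definition N2 := (nat * nat)%type.
Definition n2add (m n : N2) : N2 := (fst m + fst n, snd m + snd n).
Definition n2sub (m n : N2) : N2 := (fst m - fst n, snd m - snd n).
Definition n2le (m n : N2) : Prop := fst m <= fst n /\ snd m <= snd n.
Definition n2zero : N2 := (0, 0).
Definition e1 : N2 := (1, 0).
Definition e2 : N2 := (0, 1).

(* The data of a small category Lambda with a functor d : Lambda -> N^2.
   Composition [cmp a b] is the path "a b" (a after b), meaningful when
   [src a = rng b]. *)
Record TwoGraphData := {
  Obj : Type;
  Mor : Type;
  rng : Mor -> Obj;
  src : Mor -> Obj;
  deg : Mor -> N2;
  idm : Obj -> Mor;
  cmp : Mor -> Mor -> Mor
}.

Section Defs.
Variable L : TwoGraphData.

(* Lambda is a countable category, d is a functor, unique factorisation. *)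
Definition is_2graph : Prop :=
  (exists f : Mor L -> nat, forall a b, f a = f b -> a = b) /\
  (exists g : Obj L -> nat, forall u v, g u = g v -> u = v) /\
  (forall v, rng L (idm L v) = v /\ src L (idm L v) = v /\
             deg L (idm L v) = n2zero) /\
  (forall a b, src L a = rng L b ->
      rng L (cmp L a b) = rng L a /\ src L (cmp L a b) = src L b /\
      deg L (cmp L a b) = n2add (deg L a) (deg L b)) /\
  (forall a, cmp L (idm L (rng L a)) a = a /\ cmp L a (idm L (src L a)) = a) /\
  (forall a b c, src L a = rng L b -> src L b = rng L c ->
      cmp L (cmp L a b) c = cmp L a (cmp L b c)) /\
  (forall l m n, deg L l = n2add m n ->
      (exists mu nu, deg L mu = m /\ deg L nu = n /\ src L mu = rng L nu /\
                     cmp L mu nu = l) /\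
      (forall mu nu mu' nu',
         deg L mu = m -> deg L nu = n -> src L mu = rng L nu -> cmp L mu nu = l ->
         deg L mu' = m -> deg L nu' = n -> src L mu' = rng L nu' -> cmp L mu' nu' = l ->
         mu = mu' /\ nu = nu')).

Definition row_finite : Prop :=
  forall (v : Obj L) (n : N2), exists ls : list (Mor L),
    forall l, rng L l = v -> deg L l = n -> In l ls.

(* [seg l m n mu] : mu = l(m,n), i.e. l = l' mu l'' with d(l') = m and
   d(mu) = n - m (for m <= n <= d(l)). *)
Definition seg (l : Mor L) (m n : N2) (mu : Mor L) : Prop :=
  exists l1 l2, deg L l1 = m /\ deg L mu = n2sub n m /\
    src L l1 = rng L mu /\ src L mu = rng L l2 /\
    cmp L (cmp L l1 mu) l2 = l.

Definition is_cycle (l : Mor L) : Prop :=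
  deg L l <> n2zero /\ rng L l = src L l /\
  forall n, n2le n (deg L l) -> n <> n2zero -> n <> deg L l ->
    forall mu, seg l n n mu -> mu <> idm L (src L l).

Definition is_isolated (l : Mor L) : Prop :=
  (forall n, n2le n (deg L l) -> forall mu,
      rng L mu = rng L l -> deg L mu = n -> seg l n2zero n mu) /\
  (forall n, n2le n (deg L l) -> forall mu,
      src L mu = src L l -> deg L mu = n -> seg l (n2sub (deg L l) n) (deg L l) mu).

Definition is_blue (l : Mor L) : Prop := exists k, deg L l = (k, 0).
Definition is_red (l : Mor L) : Prop := exists k, deg L l = (0, k).

(* Rank-2 Bratteli diagram of depth N (None = infinity); the vertex of level
   n form V_n, i.e. V_n = { v | lev v = n }. *)
Definition in_depth (N : option nat) (n : nat) : Prop :=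
  match N with Some k => n <= k | None => True end.

Definition is_bratteli (N : option nat) (lev : Obj L -> nat) : Prop :=
  is_2graph /\ row_finite /\
  (* Lambda^0 is the disjoint union of the V_n, 0 <= n <= N *)
  (forall v, in_depth N (lev v)) /\
  (forall n, in_depth N n ->
      (exists v, lev v = n) /\
      (exists vs : list (Obj L), forall v, lev v = n -> In v vs)) /\
  (forall e, deg L e = e1 -> lev (src L e) = S (lev (rng L e))) /\
  (forall v, (forall e, deg L e = e1 -> src L e <> v) -> lev v = 0) /\
  (forall v, (forall e, deg L e = e1 -> rng L e <> v) ->
      match N with Some k => lev v = k | None => False end) /\
  (forall v, exists l, is_red l /\ is_cycle l /\ is_isolated l /\
      exists k, n2le k (deg L l) /\ seg l k k (idm L v)) /\
  (forall f, deg L f = e2 -> lev (rng L f) = lev (src L f)).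

Definition Frel (a b : Mor L) : Prop :=
  exists f f', deg L f = e2 /\ src L f = rng L a /\ deg L f' = e2 /\
    deg L b = deg L a /\ src L b = rng L f' /\ cmp L f a = cmp L b f'.

Inductive Fpow : nat -> Mor L -> Mor L -> Prop :=
  | Fpow0 : forall a, Fpow 0 a a
  | FpowS : forall k a b c, Fpow k a b -> Frel b c -> Fpow (S k) a c.

(* o(alpha) >= K, where o(alpha) = min { k > 0 : F^k(alpha) = alpha }
   (min of the empty set being infinity). *)
Definition order_ge (a : Mor L) (K : nat) : Prop :=
  forall k, 0 < k -> k < K -> ~ Fpow k a a.

(* Infinite path: a degree-preserving functor Omega_2 -> Lambda, given by its
   action x m n = x(m,n) on morphisms (m,n), m <= n (values for m not <= n
   are irrelevant); the object map is m |-> r(x(m,m)). *)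
Definition is_infpath (x : N2 -> N2 -> Mor L) : Prop :=
  (forall m n, n2le m n -> deg L (x m n) = n2sub n m) /\
  (forall m, x m m = idm L (rng L (x m m))) /\
  (forall m n, n2le m n -> rng L (x m n) = rng L (x m m) /\
                           src L (x m n) = rng L (x n n)) /\
  (forall m n p, n2le m n -> n2le n p -> cmp L (x m n) (x n p) = x m p).

Definition shift (p : N2) (x : N2 -> N2 -> Mor L) : N2 -> N2 -> Mor L :=
  fun m n => x (n2add m p) (n2add n p).

Definition infpath_eq (x y : N2 -> N2 -> Mor L) : Prop :=
  forall m n, n2le m n -> x m n = y m n.

End Defs.

(* Blue edges raise the level by one and red edges preserve it, so
   sigma^p x = sigma^q x forces p and q to share their first coordinate a.
   If p <> q, say p = (a, b) and q = (a, b + d) with d > 0, then x is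
   periodic with period d e2 beyond (a, b).  The blue rows x((0,c),(a,c)) all
   start at the finite level of x(0), so two of them at heights b + i d and
   b + j d (i < j) coincide, and by periodicity so do the whole rows at these
   heights.  Since the red cycles are isolated, a red path is determined by
   its source, and the coincidence moves down to the rows at heights 0 and
   K = (j - i) d.  But F moves rows down by one, so F^K fixes x(0, n e1) for
   all large n, contradicting o(x(0, n e1)) -> oo. *)

From Stdlib Require Import Arith List Lia Classical FinFun.

Ltac n2simpl := unfold n2add, n2sub, n2zero, n2le, e1, e2 in *; simpl in *.

Lemma pigeonhole_seq {A : Type} (ls : list A) (f : nat -> A) :
  (forall j, In (f j) ls) -> exists i j, i < j /\ f i = f j.
Proof.
  intros Hin. apply NNPP. intros Hno.
  assert (Hinj : Injective f).
  { intros i j Eij. destruct (lt_eq_lt_dec i j) as [[H|H]|H]; auto;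
      exfalso; apply Hno; eauto. }
  assert (Hnd : NoDup (map f (seq 0 (S (length ls))))).
  { apply Injective_map_NoDup; [exact Hinj|apply seq_NoDup]. }
  apply NoDup_incl_length with (l' := ls) in Hnd.
  - rewrite length_map, length_seq in Hnd. lia.
  - intros y Hy. apply in_map_iff in Hy. destruct Hy as (j & <- & _). apply Hin.
Qed.

Section TwoGraph.

Variable L : TwoGraphData.

Local Notation rng := (rng L).
Local Notation src := (src L).
Local Notation deg := (deg L).
Local Notation idm := (idm L).
Local Notation cmp := (cmp L).

Lemma row_finite_list (Hrf : row_finite L) (n : N2) (vs : list (Obj L)) :
  exists ls, forall l, In (rng l) vs -> deg l = n -> In l ls.
Proof.
  induction vs as [|v vs [ls Hls]].
  - exists nil. intros l [].
  - destruct (Hrf v n) as [lv Hlv].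
    exists (lv ++ ls). intros l [Hv|Hv] Hd; apply in_or_app; auto.
Qed.

Hypothesis HG : is_2graph L.

Lemma rng_cmp a b : src a = rng b -> rng (cmp a b) = rng a.
Proof. destruct HG as (_ & _ & _ & H & _). apply H. Qed.

Lemma src_cmp a b : src a = rng b -> src (cmp a b) = src b.
Proof. destruct HG as (_ & _ & _ & H & _). apply H. Qed.

Lemma deg_cmp a b : src a = rng b -> deg (cmp a b) = n2add (deg a) (deg b).
Proof. destruct HG as (_ & _ & _ & H & _). apply H. Qed.

Lemma rng_idm v : rng (idm v) = v.
Proof. destruct HG as (_ & _ & H & _). apply H. Qed.

Lemma src_idm v : src (idm v) = v.
Proof. destruct HG as (_ & _ & H & _). apply H. Qed.

Lemma deg_idm v : deg (idm v) = n2zero.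
Proof. destruct HG as (_ & _ & H & _). apply H. Qed.

Lemma cmp_idl a : cmp (idm (rng a)) a = a.
Proof. destruct HG as (_ & _ & _ & _ & H & _). apply H. Qed.

Lemma cmp_idr a : cmp a (idm (src a)) = a.
Proof. destruct HG as (_ & _ & _ & _ & H & _). apply H. Qed.

Lemma cmp_assoc a b c :
  src a = rng b -> src b = rng c -> cmp (cmp a b) c = cmp a (cmp b c).
Proof. destruct HG as (_ & _ & _ & _ & _ & H & _). apply H. Qed.

Lemma factor_exists l m n :
  deg l = n2add m n ->
  exists mu nu, deg mu = m /\ deg nu = n /\ src mu = rng nu /\ cmp mu nu = l.
Proof. destruct HG as (_ & _ & _ & _ & _ & _ & H). apply H. Qed.

Lemma factor_unique_r mu nu mu' nu' :
  deg nu = deg nu' -> src mu = rng nu -> src mu' = rng nu' ->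
  cmp mu nu = cmp mu' nu' -> mu = mu' /\ nu = nu'.
Proof.
  intros Dnu Snu Snu' E.
  assert (Dmu : deg mu = deg mu').
  { pose proof (deg_cmp _ _ Snu) as D. pose proof (deg_cmp _ _ Snu') as D'.
    rewrite E, D', Dnu in D. n2simpl.
    destruct (deg mu) as [a b], (deg mu') as [a' b'], (deg nu') as [c d]; simpl in *.
    injection D as Da Db. f_equal; lia. }
  destruct HG as (_ & _ & _ & _ & _ & _ & H).
  destruct (H (cmp mu nu) (deg mu) (deg nu)) as [_ U]; [exact (deg_cmp _ _ Snu)|].
  apply (U mu nu mu' nu'); congruence.
Qed.

Lemma idm_of_deg0 mu : deg mu = n2zero -> mu = idm (src mu) /\ rng mu = src mu.
Proof.
  intros D.
  destruct (factor_unique_r (idm (rng mu)) mu mu (idm (src mu))) as [E _].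
  - rewrite D, deg_idm. reflexivity.
  - apply src_idm.
  - symmetry. apply rng_idm.
  - rewrite cmp_idl, cmp_idr. reflexivity.
  - assert (Hsr : src mu = rng mu) by (rewrite <- E at 1; apply src_idm).
    rewrite Hsr. split; [symmetry; exact E|reflexivity].
Qed.

Lemma seg_vertex l k v :
  seg L l k k (idm v) ->
  exists l1 l2, deg l1 = k /\ src l1 = v /\ rng l2 = v /\ cmp l1 l2 = l.
Proof.
  intros (l1 & l2 & D1 & _ & S1 & S2 & E).
  rewrite rng_idm in S1. rewrite src_idm in S2.
  rewrite <- S1, cmp_idr in E.
  exists l1, l2. repeat split; congruence.
Qed.

Lemma isolated_suffix l mu :
  is_isolated L l -> n2le (deg mu) (deg l) -> src mu = src l ->
  exists m, src m = rng mu /\ cmp m mu = l.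
Proof.
  intros [_ Hiso] Hle Hsrc.
  destruct (Hiso (deg mu) Hle mu Hsrc eq_refl) as (m & m2 & Dm & _ & Sm & Sm2 & E).
  assert (Dm2 : deg m2 = n2zero).
  { pose proof (deg_cmp _ _ (eq_trans (src_cmp _ _ Sm) Sm2)) as D.
    rewrite E, deg_cmp, Dm in D by exact Sm. n2simpl.
    destruct (deg l) as [a b], (deg mu) as [c d], (deg m2) as [e f]; simpl in *.
    injection D as Da Db. f_equal; lia. }
  destruct (idm_of_deg0 m2 Dm2) as [Em2 Rm2].
  rewrite Em2, <- Rm2, <- Sm2, <- (src_cmp _ _ Sm), cmp_idr in E.
  exists m. split; assumption.
Qed.

Definition red_edges_src_inj : Prop :=
  forall e e', deg e = e2 -> deg e' = e2 -> src e = src e' -> e = e'.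

Section IsolatedRedCycles.

Hypothesis isolated_red_cycles : forall v, exists l,
  is_red L l /\ is_cycle L l /\ is_isolated L l /\
  exists k, n2le k (deg l) /\ seg L l k k (idm v).

(* The positive degree of [l1] leaves room in [l] for [g l2], for every red
   edge [g] with source [v]. *)
Lemma red_cycle_split_at v : exists l l1 l2 k j,
  is_isolated L l /\ cmp l1 l2 = l /\ src l1 = v /\ rng l2 = v /\
  deg l1 = (0, S k) /\ deg l2 = (0, j).
Proof.
  destruct (isolated_red_cycles v)
    as (l & [c Dl] & (Dnz & Rl & _) & Hiso & k & _ & Hseg).
  destruct (seg_vertex l k v Hseg) as (l1 & l2 & _ & S1 & R2 & E).
  assert (Dsum : deg l = n2add (deg l1) (deg l2))
    by (rewrite <- E; apply deg_cmp; congruence).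
  rewrite Dl in Dsum, Dnz. n2simpl.
  destruct (deg l1) as [a1 [|k']] eqn:D1', (deg l2) as [b1 j] eqn:D2; simpl in *;
    injection Dsum as Ha Hc.
  - (* [v] is the base point of the cycle: use [l = l (idm v)] instead. *)
    assert (Hl1 : deg l1 = n2zero) by (rewrite D1'; n2simpl; f_equal; lia).
    destruct (idm_of_deg0 l1 Hl1) as [_ Rl1].
    assert (Slv : src l = v).
    { rewrite <- Rl, <- E, rng_cmp by congruence. congruence. }
    destruct c as [|c]; [exfalso; apply Dnz; reflexivity|].
    exists l, l, (idm v), c, 0.
    rewrite <- Slv at 1. rewrite cmp_idr, rng_idm, deg_idm, Dl.
    split; [exact Hiso|]. repeat split; auto.
  - exists l, l1, l2, k', j.
    split; [exact Hiso|]. repeat split; try assumption;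
      [rewrite D1' | rewrite D2]; f_equal; lia.
Qed.

Lemma red_edge_src_inj : red_edges_src_inj.
Proof.
  intros e e' De De' See.
  destruct (red_cycle_split_at (src e))
    as (l & l1 & l2 & k & j & Hiso & E & S1 & R2 & D1 & D2).
  assert (Hthrough : forall g, deg g = e2 -> src g = src e ->
            exists m, src m = rng g /\ cmp m g = l1).
  { intros g Dg Sg.
    assert (Sg2 : src g = rng l2) by congruence.
    destruct (isolated_suffix l (cmp g l2)) as (m & Sm & Em); [exact Hiso| | |].
    - rewrite <- E, !deg_cmp, Dg, D1, D2 by congruence. n2simpl. lia.
    - rewrite <- E, !src_cmp by congruence. reflexivity.
    - rewrite rng_cmp in Sm by exact Sg2.
      rewrite <- cmp_assoc, <- E in Em by assumption.
      exists m. split; [exact Sm|].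
      apply (factor_unique_r _ l2 _ l2) in Em as [Em _]; [exact Em|reflexivity| |congruence].
      rewrite src_cmp by exact Sm. congruence. }
  destruct (Hthrough e De eq_refl) as (m & Sm & Em).
  destruct (Hthrough e' De' (eq_sym See)) as (m' & Sm' & Em').
  rewrite <- Em' in Em.
  apply factor_unique_r in Em as [_ Ee]; congruence.
Qed.

End IsolatedRedCycles.

Lemma red_path_src_inj (Hred : red_edges_src_inj) c mu nu :
  deg mu = (0, c) -> deg nu = (0, c) -> src mu = src nu -> mu = nu.
Proof.
  revert mu nu; induction c as [|c IH]; intros mu nu Dmu Dnu Smu.
  - destruct (idm_of_deg0 mu Dmu) as [-> _], (idm_of_deg0 nu Dnu) as [-> _].
    congruence.
  - destruct (factor_exists mu (0, c) e2) as (m1 & g & Dm1 & Dg & Sg & <-);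
      [rewrite Dmu; n2simpl; f_equal; lia|].
    destruct (factor_exists nu (0, c) e2) as (n1 & h & Dn1 & Dh & Sh & <-);
      [rewrite Dnu; n2simpl; f_equal; lia|].
    rewrite !src_cmp in Smu by assumption.
    assert (Egh : g = h) by (apply Hred; assumption). subst h.
    f_equal. apply IH; congruence.
Qed.

Section InfinitePath.

Variable x : N2 -> N2 -> Mor L.

Local Notation vertex m := (rng (x m m)).

Lemma infpath_tail_periodic a b d :
  infpath_eq L (shift L (a, b) x) (shift L (a, b + d) x) ->
  forall j n, a <= n -> x (a, b) (n, b) = x (a, b + j * d) (n, b + j * d).
Proof.
  intros Hper.
  assert (Hstep : forall c n, b <= c -> a <= n -> x (a, c) (n, c) = x (a, c + d) (n, c + d)).
  { intros c n Hc Hn.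
    specialize (Hper (0, c - b) (n - a, c - b)). unfold shift in Hper. n2simpl.
    replace (c - b + b) with c in Hper by lia.
    replace (n - a + a) with n in Hper by lia.
    replace (c - b + (b + d)) with (c + d) in Hper by lia.
    apply Hper. lia. }
  induction j as [|j IH]; intros n Hn.
  - rewrite Nat.mul_0_l, Nat.add_0_r. reflexivity.
  - replace (b + S j * d) with (b + j * d + d) by lia.
    rewrite IH by exact Hn. apply Hstep; lia.
Qed.

Hypothesis HX : is_infpath L x.

Lemma infpath_deg a b c d : a <= c -> b <= d -> deg (x (a, b) (c, d)) = (c - a, d - b).
Proof. intros; destruct HX as (Hdeg & _). apply Hdeg. n2simpl. lia. Qed.

Lemma infpath_rng a b c d : a <= c -> b <= d -> rng (x (a, b) (c, d)) = vertex (a, b).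
Proof. intros; destruct HX as (_ & _ & Hends & _). apply Hends. n2simpl. lia. Qed.

Lemma infpath_src a b c d : a <= c -> b <= d -> src (x (a, b) (c, d)) = vertex (c, d).
Proof. intros; destruct HX as (_ & _ & Hends & _). apply Hends. n2simpl. lia. Qed.

Lemma infpath_cmp a b c d e f :
  a <= c -> b <= d -> c <= e -> d <= f ->
  cmp (x (a, b) (c, d)) (x (c, d) (e, f)) = x (a, b) (e, f).
Proof. intros; destruct HX as (_ & _ & _ & Hcmp). apply Hcmp; n2simpl; lia. Qed.

(* The rectangle x((0,j),(n,j+1)) factors both as f alpha and as beta f'. *)
Lemma Frel_infpath_row n j : Frel L (x (0, S j) (n, S j)) (x (0, j) (n, j)).
Proof.
  exists (x (0, j) (0, S j)), (x (n, j) (n, S j)).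
  rewrite !infpath_deg, !infpath_cmp, !infpath_src,
    (infpath_rng 0 (S j) n (S j)), (infpath_rng n j n (S j)) by lia.
  repeat split; try reflexivity; unfold e2; f_equal; lia.
Qed.

Lemma Fpow_infpath_row n k j : Fpow L k (x (0, k + j) (n, k + j)) (x (0, j) (n, j)).
Proof.
  revert j; induction k as [|k IH]; intros j; [apply Fpow0|].
  apply FpowS with (x (0, S j) (n, S j)); [|apply Frel_infpath_row].
  replace (S k + j) with (k + S j) by lia. apply IH.
Qed.

Lemma infpath_row_eq_down (Hred : red_edges_src_inj) n b K :
  x (0, b) (n, b) = x (0, b + K) (n, b + K) -> x (0, 0) (n, 0) = x (0, K) (n, K).
Proof.
  intros E.
  assert (Ecol : x (0, 0) (0, b) = x (0, K) (0, b + K)).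
  { apply (red_path_src_inj Hred b); rewrite ?infpath_deg, ?infpath_src by lia;
      try (f_equal; lia).
    rewrite <- (infpath_rng 0 b n b), <- (infpath_rng 0 (b + K) n (b + K)), E by lia.
    reflexivity. }
  assert (Esq : cmp (x (0, 0) (n, 0)) (x (n, 0) (n, b))
              = cmp (x (0, K) (n, K)) (x (n, K) (n, b + K))).
  { rewrite !infpath_cmp, <- (infpath_cmp 0 0 0 b n b),
      <- (infpath_cmp 0 K 0 (b + K) n (b + K)), Ecol, E by lia.
    reflexivity. }
  apply factor_unique_r in Esq as [Erow _]; [exact Erow| | |].
  - rewrite !infpath_deg by lia. f_equal; lia.
  - rewrite infpath_src, (infpath_rng n 0 n b) by lia. reflexivity.
  - rewrite infpath_src, (infpath_rng n K n (b + K)) by lia. reflexivity.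
Qed.

Section Bratteli.

Variable N : option nat.
Variable lev : Obj L -> nat.
Hypothesis HB : is_bratteli L N lev.

Lemma lev_infpath a b : lev (vertex (a, b)) = lev (vertex (0, 0)) + a.
Proof.
  destruct HB as (_ & _ & _ & _ & Hblue & _ & _ & _ & Hred).
  assert (Hcol : forall c, lev (vertex (0, c)) = lev (vertex (0, 0))).
  { induction c as [|c IH]; [reflexivity|].
    rewrite <- IH, <- (infpath_src 0 c 0 (S c)), <- (infpath_rng 0 c 0 (S c)) by lia.
    symmetry. apply Hred. rewrite infpath_deg by lia. unfold e2; f_equal; lia. }
  induction a as [|a IH]; [rewrite Hcol; lia|].
  assert (Hedge : deg (x (a, b) (S a, b)) = e1)
    by (rewrite infpath_deg by lia; unfold e1; f_equal; lia).
  rewrite <- (infpath_src a b (S a) b), (Hblue _ Hedge), (infpath_rng a b (S a) b), IH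
    by lia.
  lia.
Qed.

Lemma infpath_shift_eq_fst p q :
  infpath_eq L (shift L p x) (shift L q x) -> fst p = fst q.
Proof.
  intros Heq. destruct p as [p1 p2], q as [q1 q2].
  specialize (Heq n2zero n2zero ltac:(n2simpl; lia)). unfold shift in Heq. n2simpl.
  apply (f_equal (fun l => lev (rng l))) in Heq.
  rewrite (lev_infpath p1 p2), (lev_infpath q1 q2) in Heq. simpl. lia.
Qed.

Lemma infpath_rows_finite a : exists ls, forall b, In (x (0, b) (a, b)) ls.
Proof.
  destruct HB as (_ & Hrf & Hdepth & Hfin & _).
  destruct (Hfin (lev (vertex (0, 0))) (Hdepth _)) as [_ [vs Hvs]].
  destruct (row_finite_list Hrf (a, 0) vs) as [ls Hls].
  exists ls. intros b. apply Hls.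
  - apply Hvs. rewrite infpath_rng, lev_infpath by lia. lia.
  - rewrite infpath_deg by lia. f_equal; lia.
Qed.

Lemma bratteli_red_edges_src_inj : red_edges_src_inj.
Proof.
  destruct HB as (_ & _ & _ & _ & _ & _ & _ & Hcycles & _).
  exact (red_edge_src_inj Hcycles).
Qed.

Lemma infpath_row_returns a b d :
  0 < d -> infpath_eq L (shift L (a, b) x) (shift L (a, b + d) x) ->
  exists K, 0 < K /\ forall n, a <= n -> Fpow L K (x n2zero (n, 0)) (x n2zero (n, 0)).
Proof.
  intros Hd Hper.
  destruct (infpath_rows_finite a) as [ls Hls].
  destruct (pigeonhole_seq ls (fun j => x (0, b + j * d) (a, b + j * d)) (fun j => Hls _))
    as (i & j & Hij & Eij).
  exists ((j - i) * d). split; [nia|].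
  intros n Hn.
  assert (Erow : x (0, b + i * d) (n, b + i * d)
               = x (0, b + i * d + (j - i) * d) (n, b + i * d + (j - i) * d)).
  { replace (b + i * d + (j - i) * d) with (b + j * d) by nia.
    rewrite <- (infpath_cmp 0 (b + i * d) a (b + i * d) n (b + i * d)),
      <- (infpath_cmp 0 (b + j * d) a (b + j * d) n (b + j * d)),
      <- !(infpath_tail_periodic a b d Hper) by lia.
    rewrite Eij. reflexivity. }
  pose proof (Fpow_infpath_row n ((j - i) * d) 0) as Hpow.
  rewrite Nat.add_0_r, <- (infpath_row_eq_down bratteli_red_edges_src_inj _ _ _ Erow) in Hpow.
  exact Hpow.
Qed.

End Bratteli.

End InfinitePath.

End TwoGraph.

Theorem lemma5p4 (L : TwoGraphData) (N : option nat) (lev : Obj L -> nat)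
  (x : N2 -> N2 -> Mor L) :
  is_bratteli L N lev ->
  is_infpath L x ->
  (forall K : nat, exists n0 : nat, forall n : nat, n0 <= n ->
     order_ge L (x n2zero (n, 0)) K) ->
  forall p q : N2, infpath_eq L (shift L p x) (shift L q x) -> p = q.
Proof.
  intros HB HX Hord [p1 p2] [q1 q2] Heq.
  assert (HG : is_2graph L) by apply HB.
  pose proof (infpath_shift_eq_fst L x HX N lev HB _ _ Heq) as Hfst; simpl in Hfst; subst q1.
  assert (Hno_period : forall b d, 0 < d ->
            ~ infpath_eq L (shift L (p1, b) x) (shift L (p1, b + d) x)).
  { intros b d Hd Hper.
    destruct (infpath_row_returns L HG x HX N lev HB _ _ _ Hd Hper) as (K & HK & Hret).
    destruct (Hord (S K)) as [n0 Hn0].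
    exact (Hn0 (max n0 p1) ltac:(lia) K HK ltac:(lia) (Hret (max n0 p1) ltac:(lia))). }
  destruct (lt_eq_lt_dec p2 q2) as [[Hlt|<-]|Hgt]; [exfalso| reflexivity |exfalso].
  - apply (Hno_period p2 (q2 - p2)); [lia|].
    replace (p2 + (q2 - p2)) with q2 by lia. exact Heq.
  - apply (Hno_period q2 (p2 - q2)); [lia|].
    replace (q2 + (p2 - q2)) with p2 by lia.
    intros m n Hmn. symmetry. apply Heq, Hmn.
Qed.
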